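(* Let $\mathcal A\in\mathbb R^{n_1}\otimes\cdots\otimes\mathbb R^{n_k}$, $1\le s\le k$, $2\le r\le\min\{n_1,\dots,n_s\}$. Let $U=(U^{(1)},\dots,U^{(k)})\in\mathrm V(r,n_1)\times\cdots\times\mathrm V(r,n_s)\times\mathrm B(r,n_{s+1})\times\cdots\times\mathrm B(r,n_k)$ be a KKT point of $\mathrm{mLRPOTA}(r)$ and let $1\le j\le r$. Let $\hat U=(\hat U^{(1)},\dots,\hat U^{(k)})\in\mathrm V(r-1,n_1)\times\cdots\times\mathrm V(r-1,n_s)\times\mathrm B(r-1,n_{s+1})\times\cdots\times\mathrm B(r-1,n_k)$, where $\hat U^{(i)}$ is obtained from $U^{(i)}$ by deleting its $j$-th column. If $\lambda_j(U)=0$, then $\hat U$ is a KKT point of $\mathrm{mLRPOTA}(r-1)$.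
   Context: $\mathrm V(t,n)=\{U\in\mathbb R^{n\times t}:U^{\mathsf T}U=I_t\}$; $\mathrm B(t,n)$: $n\times t$ real matrices with unit columns. For $U=(U^{(1)},\dots,U^{(k)})$, $U^{(i)}\in\mathbb R^{n_i\times t}$ with columns $\mathbf u^{(i)}_j$: $\lambda_j(U)=\langle\mathcal A,\mathbf u^{(1)}_j\otimes\cdots\otimes\mathbf u^{(k)}_j\rangle$; $\mathbf v^{(i)}_j\in\mathbb R^{n_i}$ is the contraction of $\mathcal A$ with $\mathbf u^{(l)}_j$ for all $l\ne i$; $V^{(i)}=[\mathbf v^{(i)}_1,\dots,\mathbf v^{(i)}_t]$; $\Lambda=\operatorname{diag}(\lambda_1(U),\dots,\lambda_t(U))$. Problem $\mathrm{mLRPOTA}(t)$: maximize $\sum_{j=1}^t\lambda_j(U)^2$ over $\mathrm V(t,n_1)\times\cdots\times\mathrm V(t,n_s)\times\mathrm B(t,n_{s+1})\times\cdots\times\mathrm B(t,n_k)$. A feasible $U$ is a KKT point iff there exist symmetric $P_1,\dots,P_s\in\mathbb R^{t\times t}$ and $\mathbf p\in\mathbb R^t$ with $V^{(i)}\Lambda=U^{(i)}P_i$ ($i\le s$) and $V^{(i)}\Lambda=U^{(i)}\operatorname{diag}(\mathbf p)$ ($i>s$) (the Lagrange/KKT conditions of the problem). *)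

From HB Require Import structures.
From mathcomp Require Import all_boot all_order all_algebra.
From mathcomp Require Import reals.
Set Implicit Arguments. Unset Strict Implicit. Unset Printing Implicit Defensive.
Import Order.TTheory GRing.Theory Num.Theory.
Local Open Scope ring_scope.

Section Defs.
Variable R : realType.
Variable k : nat.
Variable n : 'I_k -> nat.

Definition multi_index := {dffun forall i : 'I_k, 'I_(n i)}.
Definition tensor := multi_index -> R.

Variable t : nat.
Definition factors := forall i : 'I_k, 'M[R]_(n i, t).

(* lambda_j(U) = <A, u^(1)_j (x) ... (x) u^(k)_j> *)
Definition lambda (A : tensor) (U : factors) (j : 'I_t) : R :=
  \sum_(x : multi_index) A x * \prod_(l < k) U l (x l) j.

Definition vcontr (A : tensor) (U : factors) (i : 'I_k) (j : 'I_t) (a : 'I_(n i)) : R :=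
  \sum_(x : multi_index | x i == a) A x * \prod_(l < k | l != i) U l (x l) j.

Definition Vmat (A : tensor) (U : factors) (i0 : 'I_k) : 'M[R]_(n i0, t) :=
  \matrix_(a < n i0, j < t) @vcontr A U i0 j a.

Definition Lambda (A : tensor) (U : factors) : 'M[R]_t :=
  diag_mx (\row_j lambda A U j).

Definition stiefel m (M : 'M[R]_(m, t)) : Prop := M^T *m M = 1%:M.
Definition unit_cols m (M : 'M[R]_(m, t)) : Prop :=
  forall j : 'I_t, \sum_(a < m) M a j ^+ 2 = 1.

(* feasible set of mLRPOTA(t): the first s factors (0-based indices < s)
   are in Stiefel manifolds, the remaining ones have unit columns *)
Definition feasible (s : nat) (U : factors) : Prop :=
  (forall i : 'I_k, (i < s)%N -> stiefel (U i)) /\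
  (forall i : 'I_k, (s <= i)%N -> unit_cols (U i)).

Definition KKT_point (A : tensor) (s : nat) (U : factors) : Prop :=
  feasible s U /\
  (exists P : forall i : 'I_k, 'M[R]_t,
      forall i : 'I_k, (i < s)%N ->
        (P i)^T = P i /\ Vmat A U i *m Lambda A U = U i *m P i) /\
  (exists p : 'rV[R]_t,
      forall i : 'I_k, (s <= i)%N ->
        Vmat A U i *m Lambda A U = U i *m diag_mx p).

End Defs.

Definition delete_col (R : realType) k (n : 'I_k -> nat) (r : nat)
  (U : factors R n r) (j : 'I_r) : factors R n r.-1 :=
  fun i => col' j (U i).

(* Since lambda_j(U) = 0, column j of V^(i) Lambda vanishes, hence so does
   column j of U^(i) P_i.  For i < s the columns of U^(i) are orthonormal, so
   column j of P_i vanishes, and by symmetry so does its row j.  Then deleting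
   column j of U^(i) P_i equals (U^(i) without column j) times (P_i without
   row and column j), while deleting column j of every factor deletes
   column j of every V^(i) Lambda; diag(p) loses its j-th entry likewise. *)
From mathcomp Require Import all_boot all_order all_algebra.
From mathcomp Require Import reals.
Set Implicit Arguments. Unset Strict Implicit. Unset Printing Implicit Defensive.
Import Order.TTheory GRing.Theory Num.Theory.
Local Open Scope ring_scope.

Section DeleteColumn.
Variables (R : comPzRingType) (m r : nat) (j : 'I_r).

Lemma col_mul_diag_mx (M : 'M[R]_(m, r)) (d : 'rV_r) :
  col j (M *m diag_mx d) = d 0 j *: col j M.
Proof. by apply/matrixP => a b; rewrite mul_mx_diag !mxE mulrC. Qed.

Lemma col'_mul_diag_mx (M : 'M[R]_(m, r)) (d : 'rV_r) :
  col' j (M *m diag_mx d) = col' j M *m diag_mx (col' j d).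
Proof. by apply/matrixP => a c; rewrite !mul_mx_diag !mxE. Qed.

Lemma col'_mulmx (M : 'M[R]_(m, r)) (P : 'M[R]_r) :
  row j P = 0 -> col' j (M *m P) = col' j M *m mxsub (lift j) (lift j) P.
Proof.
move=> /matrixP Pj0; apply/matrixP => a c.
have := Pj0 0 (lift j c); rewrite !mxE => Pjc0.
rewrite (bigD1_ord j) //= Pjc0 mulr0 add0r.
by apply: eq_bigr => d _; rewrite !mxE.
Qed.

Lemma trmx_mul_col' (M : 'M[R]_(m, r)) :
  (col' j M)^T *m col' j M = mxsub (lift j) (lift j) (M^T *m M).
Proof. by rewrite tr_col' mxsub_mul. Qed.

Lemma mxsub_lift_scalar_mx (a : R) :
  mxsub (lift j) (lift j) (a%:M : 'M[R]_r) = a%:M.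
Proof. by apply/matrixP => c d; rewrite !mxE (inj_eq (@lift_inj _ j)). Qed.

End DeleteColumn.

Lemma stiefel_col_mulmx_eq0 (R : realType) m r (M : 'M[R]_(m, r)) (P : 'M[R]_r) j :
  stiefel M -> col j (M *m P) = 0 -> col j P = 0.
Proof.
move=> MtM1 MPj0.
rewrite -[col j P]mul1mx -MtM1 -mulmxA colE [M *m (P *m _)]mulmxA -colE.
by rewrite MPj0 mulmx0.
Qed.

Lemma stiefel_col' (R : realType) m r (M : 'M[R]_(m, r)) j :
  stiefel M -> stiefel (col' j M).
Proof. by rewrite /stiefel trmx_mul_col' => ->; rewrite mxsub_lift_scalar_mx. Qed.

Lemma unit_cols_col' (R : realType) m r (M : 'M[R]_(m, r)) j :
  unit_cols M -> unit_cols (col' j M).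
Proof.
move=> M1 c; rewrite -(M1 (lift j c)).
by apply: eq_bigr => a _; rewrite mxE.
Qed.

Section DeleteFactorColumn.
Variables (R : realType) (k : nat) (n : 'I_k -> nat) (r : nat).
Variables (A : tensor R n) (U : factors R n r) (j : 'I_r).

Lemma feasible_delete_col s : feasible s U -> feasible s (delete_col U j).
Proof.
move=> [stU ucU]; split => i si; first exact: stiefel_col' (stU i si).
exact: unit_cols_col' (ucU i si).
Qed.

Lemma lambda_delete_col c : lambda A (delete_col U j) c = lambda A U (lift j c).
Proof.
apply: eq_bigr => x _; congr (_ * _).
by apply: eq_bigr => l _; rewrite mxE.
Qed.

Lemma Vmat_delete_col i : Vmat A (delete_col U j) i = col' j (Vmat A U i).
Proof.
apply/matrixP => a c; rewrite !mxE; apply: eq_bigr => x _; congr (_ * _).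
by apply: eq_bigr => l _; rewrite mxE.
Qed.

Lemma Lambda_delete_col :
  Lambda A (delete_col U j) = diag_mx (col' j (\row_c lambda A U c)).
Proof.
by congr diag_mx; apply/matrixP => a c; rewrite !mxE lambda_delete_col.
Qed.

Lemma Vmat_Lambda_delete_col i :
  Vmat A (delete_col U j) i *m Lambda A (delete_col U j) =
  col' j (Vmat A U i *m Lambda A U).
Proof.
by rewrite Vmat_delete_col Lambda_delete_col /Lambda col'_mul_diag_mx.
Qed.

Lemma col_Vmat_Lambda_eq0 i :
  lambda A U j = 0 -> col j (Vmat A U i *m Lambda A U) = 0.
Proof. by move=> lam0; rewrite col_mul_diag_mx mxE lam0 scale0r. Qed.

End DeleteFactorColumn.

Theorem proposition4p3 (R : realType) (k : nat) (n : 'I_k -> nat)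
  (A : tensor R n) (s r : nat)
  (hs1 : (1 <= s)%N) (hsk : (s <= k)%N) (hr2 : (2 <= r)%N)
  (hrn : forall i : 'I_k, (i < s)%N -> (r <= n i)%N)
  (U : factors R n r) (j : 'I_r) :
  KKT_point A s U -> lambda A U j = 0 ->
  KKT_point A s (delete_col U j).
Proof.
move=> [feasU [[P stP] [p ucp]]] lam0.
split; first exact: feasible_delete_col.
split.
- exists (fun i => mxsub (lift j) (lift j) (P i)) => i si.
  have [symP VLP] := stP i si.
  have Pcol0 : col j (P i) = 0.
    by apply: stiefel_col_mulmx_eq0 (feasU.1 i si) _; rewrite -VLP col_Vmat_Lambda_eq0.
  have Prow0 : row j (P i) = 0 by rewrite -symP -tr_col Pcol0 trmx0.
  split; first by rewrite trmx_mxsub symP.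
  by rewrite Vmat_Lambda_delete_col VLP col'_mulmx.
- exists (col' j p) => i si.
  by rewrite Vmat_Lambda_delete_col ucp // col'_mul_diag_mx.
Qed.
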